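(* Let $n\ge k\ge 2$ be integers. Then \[ \mathsf{opt}_{\operatorname{bandit}}^{\operatorname{obl}}(n,k)\ge \frac{k-1}{2}\left\lfloor \log_k n\right\rfloor. \]
   Context: Prediction with expert advice in the realizable case: $\mathcal{Y}=\{1,\dots,k\}$, $\mathcal{X}=[k]^n$, experts $h_i(x)=x_i$, $i=1,\dots,n$. $\mathcal{P}_0$ is the set of finite sequences of examples in $\mathcal{X}\times\mathcal{Y}$ consistent with some $h_i$. Bandit feedback against an oblivious adversary: the adversary fixes $S\in\mathcal{P}_0$ in advance; in round $t$ the learner receives the instance $x_t$ of $S$, draws $\hat y_t$ from a distribution depending on past observations and $x_t$, and learns only whether $\hat y_t$ equals the label $y_t$ of $S$. $\mathsf{opt}_{\operatorname{bandit}}^{\operatorname{obl}}(n,k)=\inf_{\text{learner}}\sup_{S\in\mathcal{P}_0}$ expected number of mistakes ($\hat y_t\ne y_t$). *)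

From HB Require Import structures.
From mathcomp Require Import all_boot all_order all_algebra.
From mathcomp Require Import all_classical all_reals ereal.
Set Implicit Arguments. Unset Strict Implicit. Unset Printing Implicit Defensive.
Import Order.TTheory GRing.Theory Num.Theory.
Local Open Scope ring_scope.
Local Open Scope classical_set_scope.

(* Labels Y = {1,..,k} are represented by 'I_k (= {0,..,k-1});
   instances X = [k]^n are finite functions 'I_n -> 'I_k;
   expert h_i (i : 'I_n) maps x to x i. *)
Definition inst (n k : nat) := {ffun 'I_n -> 'I_k}.
Definition example (n k : nat) := (inst n k * 'I_k)%type.

Definition realizable (n k : nat) (S : seq (example n k)) : Prop :=
  exists i : 'I_n, all (fun e : example n k => e.1 i == e.2) S.

(* A learner's observation in a round: the instance, its own prediction,
   and the bandit feedback bit (prediction == true label). *)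
Definition obs (n k : nat) := (inst n k * 'I_k * bool)%type.

Definition learner (R : realType) (n k : nat) :=
  seq (obs n k) -> inst n k -> {ffun 'I_k -> R}.

Definition valid_learner (R : realType) (n k : nat) (L : learner R n k) : Prop :=
  forall (h : seq (obs n k)) (x : inst n k),
    (forall y, 0 <= L h x y) /\ \sum_(y : 'I_k) L h x y = 1.

Fixpoint exp_mistakes (R : realType) (n k : nat) (L : learner R n k)
    (h : seq (obs n k)) (S : seq (example n k)) : R :=
  match S with
  | [::] => 0
  | (x, y) :: S' =>
      \sum_(yh : 'I_k) L h x yh *
        ((yh != y)%:R + exp_mistakes L (rcons h (x, yh, yh == y)) S')
  end.

Definition opt_bandit_obl (R : realType) (n k : nat) : \bar R :=
  ereal_inf [set ereal_sup [set (exp_mistakes L [::] S)%:E | S in realizable (k:=k) (n:=n)]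
            | L in @valid_learner R n k].

From HB Require Import structures.
From mathcomp Require Import all_boot all_order all_algebra.
From mathcomp Require Import all_classical all_reals ereal.
From mathcomp Require Import lra.
Set Implicit Arguments. Unset Strict Implicit. Unset Printing Implicit Defensive.
Import Order.TTheory GRing.Theory Num.Theory.
Local Open Scope ring_scope.

(* Yao's principle.  Let d := trunc_log k n and index the first k ^ d experts
   by the base-k words t of length d.  The sequence [phases 0 t] has d phases;
   phase j shows k times the instance whose i-th coordinate is the j-th digit
   of i, with label t_j, so expert [num_of_digits t] is consistent with it.
   Bandit feedback only tells the learner whether its guess was right, and
   after a wrong guess all remaining candidate labels leave the same history.
   Hence, summed over the k values of t_j, one phase costs at least
   0 + 1 + ... + (k - 1) = 'C(k, 2) mistakes, and summed over all k ^ d words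
   the learner makes k ^ d * d * (k - 1) / 2 expected mistakes: some word
   forces at least the average d * (k - 1) / 2. *)

Lemma big_tuple_cons (V : Type) (idx : V) (op : Monoid.com_law idx)
    (T : finType) (d : nat) (F : d.+1.-tuple T -> V) :
  \big[op/idx]_(t : d.+1.-tuple T) F t =
  \big[op/idx]_(y : T) \big[op/idx]_(t : d.-tuple T) F [tuple of y :: t].
Proof.
rewrite pair_big /=.
rewrite (reindex (fun p : T * d.-tuple T => [tuple of p.1 :: p.2])) //=.
exists (fun t => (thead t, [tuple of behead t])) => [[y t] _ | t _] /=.
  by congr (_, _); apply: val_inj.
by rewrite [RHS]tuple_eta.
Qed.

Lemma exists_ge_average (R : realDomainType) (I : finType) (f : I -> R) c :
  (0 < #|I|)%N -> #|I|%:R * c <= \sum_i f i -> exists i, c <= f i.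
Proof.
move=> /card_gt0P[i0 _] sum_ge.
have [m _ f_le_m] := @arg_maxP _ _ _ i0 predT f isT.
exists m; rewrite -(@ler_pM2l _ #|I|%:R) ?ltr0n; last by apply/card_gt0P; exists i0.
apply: le_trans sum_ge _.
rewrite mulr_natl -sumr_const.
by apply: ler_sum => i _; apply: f_le_m.
Qed.

Definition digit (k j m : nat) : nat := (m %/ k ^ j) %% k.

Section Digits.
Variable k : nat.

Fixpoint num_of_digits (s : seq 'I_k) : nat :=
  if s is y :: s' then (y + k * num_of_digits s')%N else 0%N.

Lemma num_of_digits_lt (s : seq 'I_k) : (num_of_digits s < k ^ size s)%N.
Proof.
elim: s => [|y s IH] //=; rewrite expnS.
apply: (@leq_trans (k * (num_of_digits s).+1)).
  by rewrite mulnS -addSn leq_add2r.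
by rewrite leq_mul2l IH orbT.
Qed.

Lemma digit_num_of_digits (s : seq 'I_k) l : (l < size s)%N ->
  digit k l (num_of_digits s) = nth 0%N (map val s) l.
Proof.
rewrite /digit; elim: s l => [|y s IH] [|l] //= l_lt.
  by rewrite expn0 divn1 addnC mulnC modnMDl modn_small.
have k_gt0 : (0 < k)%N := leq_ltn_trans (leq0n y) (ltn_ord y).
by rewrite expnS divnMA addnC mulnC divnMDl // (divn_small (ltn_ord y)) addn0 IH.
Qed.

End Digits.

Section Adversary.
Variables (n k : nat).
Hypothesis k_gt0 : (0 < k)%N.

Definition digit_inst (j : nat) : inst n k :=
  [ffun i : 'I_n => Ordinal (ltn_pmod (i %/ k ^ j) k_gt0)].

Fixpoint phases (j : nat) (s : seq 'I_k) : seq (example n k) :=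
  if s is y :: s' then nseq k (digit_inst j, y) ++ phases j.+1 s' else [::].

Lemma phases_consistent (s : seq 'I_k) j (i : 'I_n) :
  (forall l, (l < size s)%N -> digit k (j + l) i = nth 0%N (map val s) l) ->
  all (fun e : example n k => e.1 i == e.2) (phases j s).
Proof.
elim: s j => [|y s IH] j //= digits_i.
rewrite all_cat all_nseq; apply/andP; split.
  apply/orP; right; apply/eqP/val_inj; rewrite ffunE /=.
  by have := digits_i 0%N isT; rewrite addn0.
by apply: IH => l l_lt; rewrite addSnnS; apply: digits_i.
Qed.

Lemma realizable_phases (s : seq 'I_k) :
  (k ^ size s <= n)%N -> realizable (phases 0 s).
Proof.
move=> ks_le_n.
exists (Ordinal (leq_trans (num_of_digits_lt s) ks_le_n)).
by apply: phases_consistent => l; exact: digit_num_of_digits.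
Qed.

End Adversary.

Section LearnerLowerBound.
Variables (R : realType) (n k : nat) (L : learner R n k).
Hypothesis L_valid : valid_learner L.

Lemma learner_avg_ge h x (G : 'I_k -> R) c :
  (forall g, c <= G g) -> c <= \sum_g L h x g * G g.
Proof.
have [L_ge0 L_sum1] := L_valid h x; move=> c_le_G.
rewrite -[c]mul1r -L_sum1 mulr_suml.
by apply: ler_sum => g _; apply: ler_wpM2l.
Qed.

Section Phase.
Variables (J : finType) (T : J -> seq (example n k)) (x : inst n k).

Definition phase_cost (h : seq (obs n k)) (r : nat) (y : 'I_k) : R :=
  \sum_j exp_mistakes L h (nseq r (x, y) ++ T j).

Lemma phase_costS h r y : phase_cost h r.+1 y =
  \sum_g L h x g *
    ((g != y)%:R * #|J|%:R + phase_cost (rcons h (x, g, g == y)) r y).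
Proof.
rewrite /phase_cost /= exchange_big /=; apply: eq_bigr => g _.
by rewrite -mulr_sumr big_split /= sumr_const mulr_natr.
Qed.

Variable B : R.
Hypothesis B_le_cost : forall h, B <= \sum_j exp_mistakes L h (T j).

Lemma phase_cost_ge h r y : B <= phase_cost h r y.
Proof.
elim: r h => [|r IH] h; first exact: B_le_cost.
rewrite phase_costS; apply: learner_avg_ge => g.
by rewrite -[B]add0r lerD ?mulr_ge0.
Qed.

Lemma phase_cost_sum_ge r h (A : {set 'I_k}) : (#|A| <= r)%N ->
  #|A|%:R * B + #|J|%:R * 'C(#|A|, 2)%:R <= \sum_(y in A) phase_cost h r y.
Proof.
elim: r h A => [|r IH] h A A_le_r; have [->|[a0 a0A]] := set_0Vmem A;
  try by rewrite big_set0 cards0 !mul0r mulr0 addr0.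
  by move: A_le_r; rewrite leqn0 cards_eq0 => /eqP A0; rewrite A0 inE in a0A.
under eq_bigr do rewrite phase_costS.
rewrite exchange_big /=; under eq_bigr do rewrite -mulr_sumr.
apply: learner_avg_ge => g.
(* Every label of A other than [a] differs from the guess g, so all of them
   continue from the same history: this is where bandit feedback hurts. *)
pose a := if g \in A then g else a0.
have aA : a \in A by rewrite /a; case: ifP.
have a'_ne_g y : y \in A :\ a -> (g == y) = false.
  rewrite in_setD1 /a => /andP[]; case: ifP => [_|gA'] y_ne_a yA.
    by rewrite eq_sym (negbTE y_ne_a).
  by apply/eqP=> g_eq_y; rewrite g_eq_y yA in gA'.
rewrite (bigD1 a aA) /= (eq_bigl [in A :\ a]) => [|y]; last by rewrite in_setD1 andbC.
rewrite (eq_bigr (fun y => #|J|%:R + phase_cost (rcons h (x, g, false)) r y)); last first.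
  by move=> y /a'_ne_g g_ne_y; rewrite g_ne_y mul1r.
have cost_a : B <= (g != a)%:R * #|J|%:R + phase_cost (rcons h (x, g, g == a)) r a.
  by rewrite -[B]add0r lerD ?mulr_ge0 ?phase_cost_ge.
have card_A : #|A| = #|A :\ a|.+1 by rewrite (cardsD1 a A) aA.
have := IH (rcons h (x, g, false)) (A :\ a); rewrite -ltnS -card_A => /(_ A_le_r).
rewrite big_split /= sumr_const card_A binS bin1 natrD -natr1 -mulr_natr.
by move: cost_a; lra.
Qed.

End Phase.

Hypothesis k_gt0 : (0 < k)%N.

Lemma phases_sum_ge d j h :
  (k ^ d)%:R * ((k - 1)%:R / 2 * d%:R) <=
  \sum_(t : d.-tuple 'I_k) exp_mistakes L h (phases n k_gt0 j t).
Proof.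
elim: d j h => [|d IH] j h.
  by rewrite !mulr0 big1 // => t _; rewrite tuple0.
rewrite big_tuple_cons /= (eq_bigl [in [set: 'I_k]]) => [|y]; last by rewrite inE.
have := @phase_cost_sum_ge _ (fun t : d.-tuple 'I_k => phases n k_gt0 j.+1 t)
  (digit_inst n k_gt0 j) _ (IH j.+1) k h [set: 'I_k].
rewrite cardsT card_tuple !card_ord => /(_ (leqnn k)); apply: le_trans.
have bin2R : 'C(k, 2)%:R = k%:R * (k - 1)%:R / 2 :> R.
  rewrite -[LHS](@mulfK _ 2) ?pnatr_eq0 //; congr (_ / 2).
  by apply/eqP; rewrite -!natrM eqr_nat mulnC -mul_bin_diag bin1 subn1.
rewrite bin2R expnS natrM -[d.+1]addn1 natrD; lra.
Qed.

End LearnerLowerBound.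

Theorem lemma4p10 (R : realType) (n k : nat) (hk : (2 <= k)%N) (hkn : (k <= n)%N) :
  (((k - 1)%:R / 2 * (trunc_log k n)%:R : R)%:E <= opt_bandit_obl R n k)%E.
Proof.
have k_gt0 : (0 < k)%N := ltnW hk.
set d := trunc_log k n.
apply: le_ereal_inf_tmp => _ [L L_valid <-].
have [t lb_t] : exists t : d.-tuple 'I_k,
    (k - 1)%:R / 2 * d%:R <= exp_mistakes L [::] (phases n k_gt0 0 t).
  apply: exists_ge_average; rewrite card_tuple card_ord ?expn_gt0 ?k_gt0 //.
  exact: phases_sum_ge.
apply: le_ereal_sup_tmp; exists (exp_mistakes L [::] (phases n k_gt0 0 t))%:E.
  exists (phases n k_gt0 0 t) => //; apply: realizable_phases.
  by rewrite size_tuple trunc_logP // (leq_trans k_gt0 hkn).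
by rewrite lee_fin.
Qed.
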